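(* Let $f\colon (A,I)\to(B,J)$ be an excision datum. Then every ring map from $A$ to a valuation ring of rank $\le 1$ factors through $A\to A/I\times B$ (i.e. factors through $A\to A/I$ or through $f\colon A\to B$). In particular $\mathrm{Spec}(A/I\times B)\to\mathrm{Spec}(A)$ is an $\mathrm{arc}$-cover.
   Context: An excision datum is a ring map $f\colon A\to B$ with ideals $I\subset A$, $J\subset B$ such that $f$ carries $I$ isomorphically onto $J$. A map $Y\to X$ of qcqs schemes is an $\mathrm{arc}$-cover if for every valuation ring $V$ of rank $\le1$ and map $\mathrm{Spec}(V)\to X$ there is a faithfully flat map $V\to W$ to a rank $\le 1$ valuation ring and a map $\mathrm{Spec}(W)\to Y$ such that $\mathrm{Spec}(W)\to Y\to X$ equals $\mathrm{Spec}(W)\to\mathrm{Spec}(V)\to X$. *)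

From HB Require Import structures.
From mathcomp Require Import all_boot all_algebra.
Set Implicit Arguments. Unset Strict Implicit. Unset Printing Implicit Defensive.
Import GRing.Theory.
Local Open Scope ring_scope.

Definition is_ideal (R : comPzRingType) (I : pred R) : Prop :=
  [/\ 0 \in I,
      (forall x y, x \in I -> y \in I -> x + y \in I) &
      (forall r x, x \in I -> r * x \in I)].

Definition excision_datum (A B : comPzRingType) (f : {rmorphism A -> B})
    (I : pred A) (J : pred B) : Prop :=
  [/\ is_ideal I, is_ideal J,
      {in I &, injective f},
      (forall a, a \in I -> f a \in J) &
      (forall b, b \in J -> exists2 a, a \in I & f a = b)].

Definition rdvd (R : comPzRingType) (x y : R) : Prop := exists c : R, y = c * x.

Definition valuation_ring (V : idomainType) : Prop :=
  forall x y : V, rdvd x y \/ rdvd y x.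

(* V is a valuation ring of rank <= 1: valuation ring whose value group
   (nonzero elements modulo units, ordered by divisibility) is archimedean,
   i.e. every nonzero element divides some power of any nonzero non-unit. *)
Definition valuation_ring_rank_le1 (V : idomainType) : Prop :=
  valuation_ring V /\
  (forall x y : V, x != 0 -> y != 0 -> y \notin GRing.unit ->
     exists n : nat, rdvd x (y ^+ n)).

(* A map V -> W of valuation rings is faithfully flat iff it is injective
   and local (Stacks); we use this as the definition for maps between
   valuation rings. *)
Definition valuation_ff (V W : idomainType) (phi : {rmorphism V -> W}) : Prop :=
  injective phi /\ (forall x : V, phi x \is a GRing.unit -> x \is a GRing.unit).

From HB Require Import structures.
From mathcomp Require Import all_boot all_algebra.
From mathcomp Require Import ring.
From Stdlib Require Import Classical.

Set Implicit Arguments.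
Unset Strict Implicit.
Unset Printing Implicit Defensive.
Import GRing.Theory.
Local Open Scope ring_scope.

(* If g : A -> V kills I, it factors through A/I.  Otherwise pick a0 in I with
   g a0 <> 0 and, for b in B, let lift b be the unique element of I with
   f (lift b) = b * f a0; the factorisation must be h b = g (lift b) / g a0.
   This is a ring map once g a0 divides every g (lift b).  The identity
   lift (b^m) * a0^m = (lift b)^m * a0 shows that x = g (lift b) / g a0
   satisfies g a0 * x^m in V for all m, i.e. x is almost integral over V;
   and a valuation ring of rank <= 1 is completely integrally closed, because
   a non-unit y with y^m | u for all m would contradict the archimedean
   property. *)

(* Fractions are avoided: for u <> 0 the hypothesis says that u * (w / u)^m
   lies in V for all m, i.e. that w / u is almost integral over V. *)
Definition completely_integrally_closed (V : idomainType) : Prop :=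
  forall u w : V, u != 0 -> (forall m, rdvd (u ^+ m) (w ^+ m * u)) -> rdvd u w.

Lemma rank_le1_unit_of_rdvd_pow (V : idomainType) (x y : V) :
  valuation_ring_rank_le1 V -> x != 0 -> (forall m, rdvd (y ^+ m) x) ->
  y \is a GRing.unit.
Proof.
move=> [_ arch] x0 ydvd.
have y0 : y != 0.
  by apply: contraNneq x0 => y0; have [c ->] := ydvd 1%N; rewrite y0 mulr0.
have [//|yNU] := boolP (y \is a GRing.unit).
have [n [c yn]] := arch x y x0 y0 yNU.
have [d xE] := ydvd n.+1.
rewrite -(negbTE yNU); apply/unitrPr; exists (c * d).
apply: (mulIf (expf_neq0 n y0)); rewrite mul1r [RHS]yn xE exprS; ring.
Qed.

Lemma rank_le1_completely_integrally_closed (V : idomainType) :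
  valuation_ring_rank_le1 V -> completely_integrally_closed V.
Proof.
move=> rk u w u0 almost; have [val _] := rk.
have [//|[y uE]] := val u w.
suff yU : y \is a GRing.unit by exists y^-1; rewrite uE mulKr.
apply: (rank_le1_unit_of_rdvd_pow rk u0) => m.
have [c Hc] := almost m; exists c.
apply: (mulIf (expf_neq0 m u0)).
by rewrite [c * _]mulrC -mulrA -Hc mulrA -exprMn -uE mulrC.
Qed.

Lemma valuation_ff_id (V : idomainType) : valuation_ff (idfun : {rmorphism V -> V}).
Proof. by split. Qed.

Lemma factor_through_quotient_prod (A B V : comPzRingType)
    (f : {rmorphism A -> B}) (I : pred A) (g : {rmorphism A -> V}) :
  (forall a, a \in I -> g a = 0) \/
  (exists h : {rmorphism B -> V}, forall a, g a = h (f a)) ->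
  exists h : {rmorphism (A * B)%type -> V},
    (forall a, a \in I -> h (a, 0) = 0) /\ (forall a, h (a, f a) = g a).
Proof.
case=> [gI | [h gE]].
  by exists (g \o fst); split=> [a /gI|].
by exists (h \o snd); split=> [a _ /=|a /=]; rewrite ?rmorph0 ?gE.
Qed.

Section Excision.
Variables (A B : comPzRingType) (f : {rmorphism A -> B}) (I : pred A) (J : pred B).
Hypothesis exc : excision_datum f I J.

Let idealD x y : x \in I -> y \in I -> x + y \in I.
Proof. by case: exc => -[_ ID _] _ _ _ _; apply: ID. Qed.

Let idealM r x : x \in I -> r * x \in I.
Proof. by case: exc => -[_ _ IM] _ _ _ _; apply: IM. Qed.

Let f_inj : {in I &, injective f}.
Proof. by case: exc. Qed.

Section Lift.
Variable a0 : A.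
Hypothesis a0I : a0 \in I.

Lemma excision_lift_ex b : exists a, (a \in I) && (f a == b * f a0).
Proof.
case: exc => _ [_ _ JM] _ fIJ fJI.
have [a aI fa] := fJI _ (JM b _ (fIJ a0 a0I)).
by exists a; rewrite aI fa eqxx.
Qed.

Definition lift b := xchoose (excision_lift_ex b).

Lemma liftI b : lift b \in I.
Proof. by case/andP: (xchooseP (excision_lift_ex b)). Qed.

Lemma liftE b : f (lift b) = b * f a0.
Proof. by case/andP: (xchooseP (excision_lift_ex b)) => _ /eqP. Qed.

Lemma lift_f c : lift (f c) = c * a0.
Proof. by apply: f_inj; rewrite ?liftI ?idealM // liftE rmorphM. Qed.

Lemma liftD x y : lift (x + y) = lift x + lift y.
Proof.
by apply: f_inj; rewrite ?liftI ?idealD ?liftI // rmorphD !liftE mulrDl.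
Qed.

Lemma liftM x y : lift (x * y) * a0 = lift x * lift y.
Proof.
apply: f_inj; [by rewrite idealM | by rewrite mulrC idealM ?liftI |].
by rewrite !rmorphM !liftE; ring.
Qed.

Lemma liftXn b m : lift (b ^+ m) * a0 ^+ m = lift b ^+ m * a0.
Proof.
apply: f_inj; [by rewrite mulrC idealM ?liftI | by rewrite idealM |].
by rewrite !rmorphM !rmorphXn !liftE exprMn mulrAC.
Qed.

Section Factor.
Variables (V : idomainType) (g : {rmorphism A -> V}).
Hypothesis ga0 : g a0 != 0.
Hypothesis dvd_lift : forall b, rdvd (g a0) (g (lift b)).

Lemma quot_lift_ex b : exists v, g (lift b) == v * g a0.
Proof. by have [c ->] := dvd_lift b; exists c. Qed.

Definition quot_lift b := xchoose (quot_lift_ex b).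

Lemma quot_liftE b : quot_lift b * g a0 = g (lift b).
Proof. exact/esym/eqP/(xchooseP (quot_lift_ex b)). Qed.

Lemma quot_lift_f c : quot_lift (f c) = g c.
Proof. by apply: (mulIf ga0); rewrite quot_liftE lift_f rmorphM. Qed.

Lemma quot_lift_nmod : nmod_morphism quot_lift.
Proof.
split=> [|x y]; first by rewrite -(rmorph0 f) quot_lift_f rmorph0.
by apply: (mulIf ga0); rewrite mulrDl !quot_liftE liftD rmorphD.
Qed.

Lemma quot_lift_monoid : monoid_morphism quot_lift.
Proof.
split=> [|x y]; first by rewrite -(rmorph1 f) quot_lift_f rmorph1.
apply: (mulIf ga0); apply: (mulIf ga0).
rewrite quot_liftE -rmorphM liftM rmorphM -!quot_liftE; ring.
Qed.

HB.instance Definition _ := GRing.isNmodMorphism.Build B V quot_lift quot_lift_nmod.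
HB.instance Definition _ := GRing.isMonoidMorphism.Build B V quot_lift quot_lift_monoid.

Lemma excision_factor : exists h : {rmorphism B -> V}, forall a, g a = h (f a).
Proof. by exists quot_lift => a; rewrite /= quot_lift_f. Qed.

End Factor.

Lemma rank_le1_rdvd_lift (V : idomainType) (g : {rmorphism A -> V}) b :
  valuation_ring_rank_le1 V -> g a0 != 0 -> rdvd (g a0) (g (lift b)).
Proof.
move=> rk ga0; apply: (rank_le1_completely_integrally_closed rk ga0) => m.
exists (g (lift (b ^+ m))).
by rewrite -!rmorphXn -!rmorphM liftXn.
Qed.

End Lift.

Lemma excision_rank_le1_factor (V : idomainType) (g : {rmorphism A -> V}) :
  valuation_ring_rank_le1 V ->
  (forall a, a \in I -> g a = 0) \/
  (exists h : {rmorphism B -> V}, forall a, g a = h (f a)).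
Proof.
move=> rk; have [[a0 [a0I ga0]] | gI] := classic (exists a, a \in I /\ g a != 0).
  right; apply: (excision_factor (a0I := a0I) ga0) => b.
  exact: rank_le1_rdvd_lift.
by left=> a aI; apply/eqP/negPn; apply: contra_notN gI => ga; exists a.
Qed.

End Excision.

(* Ring maps A/I x B -> W are encoded as ring maps h : A x B -> W with
   h (a, 0) = 0 for a in I (universal property of the quotient). *)
Theorem mainTheorem5 (A B : comPzRingType) (f : {rmorphism A -> B})
    (I : pred A) (J : pred B) :
  excision_datum f I J ->
  (forall (V : idomainType) (g : {rmorphism A -> V}),
     valuation_ring_rank_le1 V ->
     (forall a, a \in I -> g a = 0) \/
     (exists h : {rmorphism B -> V}, forall a, g a = h (f a)))
  /\
  (forall (V : idomainType) (g : {rmorphism A -> V}),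
     valuation_ring_rank_le1 V ->
     exists (W : idomainType) (phi : {rmorphism V -> W})
            (h : {rmorphism (A * B)%type -> W}),
       [/\ valuation_ring_rank_le1 W, valuation_ff phi,
           (forall a, a \in I -> h (a, 0) = 0) &
           (forall a, h (a, f a) = phi (g a))]).
Proof.
move=> exc; split=> [|V g rk]; first exact: excision_rank_le1_factor exc.
have [h [hI hf]] :=
  factor_through_quotient_prod (excision_rank_le1_factor exc g rk).
by exists V, idfun, h; split=> //; exact: valuation_ff_id.
Qed.
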